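(* Let $G$ be a graph with minimum degree at least $2$ and maximum degree at most $4$, let $k$ be an integer, and write $r(G,k) = k - |V(G)|/3$. Let $C,H$ be a general crown in $G$ such that $G-C-H$ has minimum degree at least $2$, and let $(G',k')$ be obtained as follows: (i) if $C,H$ is a proper crown, $G' = G - (C\cup H)$ and $k' = k-|H|$; (ii) if $C,H$ is an almost crown and $H$ is not an independent set, $G' = G-(C\cup H)$ and $k' = k-|H|$; (iii) if $C,H$ is an almost crown and $H$ is an independent set, $G'$ is obtained from $G$ by merging the vertices of $C\cup H$ into a single vertex, and $k' = k-(|H|-1)$. Then in each case $r(G',k') \le r(G,k)$.
   Context: All graphs are finite, simple and undirected. A general crown in $G$ is a pair $C,H$ of disjoint nonempty subsets of $V(G)$ such that every vertex of $C$ has degree $0$ in $G-H$ (i.e., all neighbors of vertices of $C$ lie in $H$). A proper crown is a general crown $C,H$ for which there is a matching between $C$ and $H$ of size $|H|$. An almost crown is a general crown $C,H$ with $|H| = |C|+1$ and $|N(S)|\ge |S|+1$ for every nonempty $S\subseteq C$, where $N(S) = (\bigcup_{v\in S}N(v))\setminus S$. For a set $S$ of vertices, $G-S$ is the graph obtained by deleting $S$ and all incident edges. Merging a set $S$ of vertices means deleting $S$ and adding a new vertex $v^*$ adjacent exactly to those remaining vertices that had a neighbor in $S$. *)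

From HB Require Import structures.
From mathcomp Require Import all_boot all_order all_algebra.
Set Implicit Arguments. Unset Strict Implicit. Unset Printing Implicit Defensive.
Import Order.TTheory GRing.Theory Num.Theory.

Record graph := Graph {
  vtx :> finType;
  adj : rel vtx;
  adj_sym : symmetric adj;
  adj_irr : irreflexive adj }.

Section Graphs.
Variable G : graph.

Definition nbhd (x : G) : {set G} := [set y | adj x y].
Definition deg (x : G) : nat := #|nbhd x|.
Definition min_deg_ge (d : nat) : Prop := forall x : G, d <= deg x.
Definition max_deg_le (d : nat) : Prop := forall x : G, deg x <= d.

Definition nbhd_set (S : {set G}) : {set G} :=
  (\bigcup_(v in S) nbhd v) :\: S.

Definition independent (S : {set G}) : Prop :=
  forall x y, x \in S -> y \in S -> ~~ adj x y.

(* general crown: C, H disjoint nonempty, every vertex of C has degree 0 in G - H *)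
Definition general_crown (C H : {set G}) : Prop :=
  [/\ [disjoint C & H], C != set0, H != set0 &
      forall c y, c \in C -> adj c y -> y \in H].

Definition matching_between (C H : {set G}) (M : {set G * G}) : Prop :=
  (forall p, p \in M -> [/\ p.1 \in C, p.2 \in H & adj p.1 p.2]) /\
  (forall p q, p \in M -> q \in M -> p != q ->
     [/\ p.1 != q.1, p.2 != q.2, p.1 != q.2 & p.2 != q.1]).

Definition proper_crown (C H : {set G}) : Prop :=
  general_crown C H /\
  exists M : {set G * G}, matching_between C H M /\ #|M| = #|H|.

Definition almost_crown (C H : {set G}) : Prop :=
  [/\ general_crown C H, #|H| = #|C|.+1 &
      forall S : {set G}, S \subset C -> S != set0 -> #|S|.+1 <= #|nbhd_set S| ].

End Graphs.

Section Delete.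
Variables (G : graph) (S : {set G}).
Definition del_vtx : finType := {x : G | x \notin S}.
Definition del_adj : rel del_vtx := fun x y => adj (val x) (val y).
Lemma del_adj_sym : symmetric del_adj.
Proof. by move=> x y; rewrite /del_adj adj_sym. Qed.
Lemma del_adj_irr : irreflexive del_adj.
Proof. by move=> x; rewrite /del_adj adj_irr. Qed.
Definition del_graph : graph := Graph del_adj_sym del_adj_irr.
End Delete.

(* merging S: delete S, add a new vertex (None) adjacent exactly to the
   remaining vertices having a neighbour in S *)
Section Merge.
Variables (G : graph) (S : {set G}).
Definition merge_vtx : finType := option (del_vtx S).
Definition merge_adj : rel merge_vtx := fun x y =>
  match x, y with
  | Some a, Some b => adj (val a) (val b)
  | Some a, None => [exists s in S, adj (val a) s]
  | None, Some b => [exists s in S, adj (val b) s]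
  | None, None => false
  end.
Lemma merge_adj_sym : symmetric merge_adj.
Proof. by case=> [a|] [b|] //=; rewrite adj_sym. Qed.
Lemma merge_adj_irr : irreflexive merge_adj.
Proof. by case=> [a|] //=; rewrite adj_irr. Qed.
Definition merge_graph : graph := Graph merge_adj_sym merge_adj_irr.
End Merge.

Definition rmeas (G : graph) (k : int) : rat :=
  (k%:~R - (#|G|)%:R / 3)%R.

From HB Require Import structures.
From mathcomp Require Import all_boot all_order all_algebra.
From mathcomp Require Import lra zify.
Import Order.TTheory GRing.Theory Num.Theory.

(* Deleting a set S of vertices and lowering k by h does not increase
   r(G,k) = k - |V(G)|/3 as soon as |S| <= 3h; merging S needs |S| <= 3h + 1.
   So everything reduces to counting |C| against |H|.  For an almost crown,
   |H| = |C| + 1 settles this directly.  For a proper crown, count the edges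
   between C and H: every vertex of C has at least 2 of them and every vertex
   of H at most 4, so |C| <= 2|H|. *)

Lemma card_nbhdI (G : graph) (x : G) (A : {set G}) :
  #|nbhd x :&: A| = \sum_(y in A) (adj x y : nat).
Proof.
rewrite -sum1_card big_mkcond [RHS]big_mkcond /=; apply: eq_bigr => y _.
by rewrite !inE andbC; case: (y \in A); case: (adj x y).
Qed.

Lemma double_count_nbhd (G : graph) (C H : {set G}) (a b : nat) :
  (forall c y, c \in C -> adj c y -> y \in H) ->
  (forall c, c \in C -> a <= deg c) ->
  (forall h, h \in H -> deg h <= b) ->
  a * #|C| <= b * #|H|.
Proof.
move=> nbhdC_sub degC degH.
have lower : a * #|C| <= \sum_(c in C) \sum_(h in H) (adj c h : nat).
  rewrite mulnC -sum_nat_const; apply: leq_sum => c cC.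
  rewrite -card_nbhdI (setIidPl _); first exact: degC.
  by apply/subsetP => y; rewrite inE; apply: nbhdC_sub.
have upper : \sum_(h in H) \sum_(c in C) (adj h c : nat) <= b * #|H|.
  rewrite mulnC -sum_nat_const; apply: leq_sum => h hH.
  rewrite -card_nbhdI; apply: leq_trans (degH h hH).
  by rewrite subset_leq_card // subsetIl.
rewrite (leq_trans lower) // exchange_big (leq_trans _ upper) //.
by apply/eq_leq/eq_bigr => h _; apply: eq_bigr => c _; rewrite adj_sym.
Qed.

Lemma crown_card_le (G : graph) (C H : {set G}) :
  min_deg_ge G 2 -> max_deg_le G 4 -> general_crown C H ->
  #|C| <= 2 * #|H|.
Proof.
move=> mindeg maxdeg [_ _ _ nbhdC_sub].
rewrite -(leq_pmul2l (isT : 0 < 2)) mulnA.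
by apply: double_count_nbhd => // x _.
Qed.

Lemma card_del_graph (G : graph) (S : {set G}) :
  #|del_graph S| = #|G| - #|S|.
Proof.
rewrite card_sig [#|S|]cardsCs subKn ?max_card //.
by apply: eq_card => x; rewrite !inE.
Qed.

Lemma card_merge_graph (G : graph) (S : {set G}) :
  #|merge_graph S| = (#|G| - #|S|).+1.
Proof. by rewrite card_option card_del_graph. Qed.

Lemma rmeas_del_graph_le (G : graph) (S : {set G}) (k : int) (h : nat) :
  #|S| <= 3 * h -> (rmeas (del_graph S) (k - h%:Z) <= rmeas G k)%R.
Proof.
move=> le_S; rewrite /rmeas card_del_graph natrB ?max_card // intrB.
have : (#|S|%:R <= 3 * h%:R :> rat)%R by rewrite -natrM ler_nat.
lra.
Qed.

Lemma rmeas_merge_graph_le (G : graph) (S : {set G}) (k : int) (h : nat) :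
  #|S| <= 3 * h + 1 -> (rmeas (merge_graph S) (k - h%:Z) <= rmeas G k)%R.
Proof.
move=> le_S; rewrite /rmeas card_merge_graph -addn1 natrD natrB ?max_card //.
rewrite intrB.
have : (#|S|%:R <= (3 * h + 1)%:R :> rat)%R by rewrite ler_nat.
rewrite natrD natrM mulr1n.
lra.
Qed.

Theorem lemma2 (G : graph) (k : int) (C H : {set G}) :
  min_deg_ge G 2 -> max_deg_le G 4 ->
  general_crown C H ->
  min_deg_ge (del_graph (C :|: H)) 2 ->
  [/\ proper_crown C H ->
        (rmeas (del_graph (C :|: H)) (k - (#|H|)%:Z) <= rmeas G k)%R,
      almost_crown C H -> ~ independent H ->
        (rmeas (del_graph (C :|: H)) (k - (#|H|)%:Z) <= rmeas G k)%R &
      almost_crown C H -> independent H ->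
        (rmeas (merge_graph (C :|: H)) (k - ((#|H|)%:Z - 1)) <= rmeas G k)%R].
Proof.
move=> mindeg maxdeg crownCH _.
have [disjCH _ _ _] := crownCH.
have card_CH : #|C :|: H| = #|C| + #|H|.
  by rewrite cardsU (disjoint_setI0 disjCH) cards0 subn0.
split.
- move=> _; apply: rmeas_del_graph_le.
  by have := @crown_card_le G C H mindeg maxdeg crownCH; rewrite card_CH; lia.
- move=> [_ card_H _] _; apply: rmeas_del_graph_le; rewrite card_CH; lia.
- move=> [_ card_H _] _.
  have -> : (#|H|%:Z - 1 = #|C|%:Z)%R by rewrite card_H -addn1 PoszD addrK.
  apply: rmeas_merge_graph_le; rewrite card_CH; lia.
Qed.
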